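(* Let $(V,E,W)$ and $(\tilde V,\tilde E,\tilde W)$ be finite connected weighted graphs with shortest-path metrics $d_E$ and $d_{\tilde E}$, let $f:V\to\tilde V$ be any map, and let $\mathcal{F}$ be a universal approximator. Fix enumerations of $V$ and $\tilde V$. For every $\epsilon>0$ there is $\hat f\in\bigcup_{c\in\mathbb{N}_+}\mathcal{F}_{\#V,\#\tilde V,c}$ such that the map $\hat T:V\to\mathcal{P}(\tilde V)$, $$\hat T(x)=\sum_{u\in\tilde V}\Big[P_{\Delta_{\#\tilde V}}\circ\hat f\big((d_E(x,v))_{v\in V}\big)\Big]_u\,\delta_u,$$ satisfies $\max_{x\in V}W_1\big(\hat T(x),\delta_{f(x)}\big)<\epsilon$, where $W_1$ is the 1-Wasserstein distance on probability measures on $(\tilde V,d_{\tilde E})$.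
   Context: A weighted graph $(V,E,W)$ has edge weights $W:E\to(0,\infty)$; it is connected if any two vertices are joined by a path, and $d_E(u,v)$ is the minimum over paths $u=v_1,\dots,v_T=v$ of $\sum_tW(\{v_t,v_{t+1}\})$. $\Delta_k$ is the standard simplex in $\mathbb{R}^k$ and $P_{\Delta_k}$ the Euclidean orthogonal projection onto it. A universal approximator is a family $\mathcal{F}=\{\mathcal{F}_{n,m,c}\}$, with $\mathcal{F}_{n,m,c}$ nested in $c$ sets of maps $\mathbb{R}^n\to\mathbb{R}^m$, together with a rate function $r(\omega,K,n,m,c)$ decreasing to $0$ in $c$, such that for every uniformly continuous $f:\mathbb{R}^n\to\mathbb{R}^m$ with continuous modulus $\omega$ and every compact $K$, some $\hat f\in\mathcal{F}_{n,m,c}$ satisfies $\sup_K\|f-\hat f\|\le r(\omega,K,n,m,c)$. *)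

From HB Require Import structures.
From mathcomp Require Import all_boot all_order all_algebra.
From mathcomp Require Import all_classical all_reals all_analysis.
Set Implicit Arguments. Unset Strict Implicit. Unset Printing Implicit Defensive.
Import Order.TTheory GRing.Theory Num.Theory.
Import numFieldNormedType.Exports.
Local Open Scope classical_set_scope.
Local Open Scope ring_scope.

Section Defs.
Variable R : realType.

Definition enorm (n : nat) (x : 'rV[R]_n) : R := Num.sqrt (\sum_(i < n) x ord0 i ^+ 2).

Definition weighted_graph (V : finType) (e : rel V) (W : V -> V -> R) : Prop :=
  symmetric e /\ (forall u v, W u v = W v u) /\ (forall u v, e u v -> 0 < W u v).

Definition connected_graph (V : finType) (e : rel V) : Prop :=
  forall u v : V, exists p : seq V, path e u p /\ last u p = v.

Fixpoint walk_len (V : finType) (W : V -> V -> R) (u : V) (p : seq V) : R :=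
  match p with
  | [::] => 0
  | x :: p' => W u x + walk_len W x p'
  end.

(** shortest-path metric d_E (minimum over paths; written as the infimum of the
    set of path lengths, which is attained for finite connected graphs) *)
Definition graph_dist (V : finType) (e : rel V) (W : V -> V -> R) (u v : V) : R :=
  inf [set L : R | exists p : seq V, [/\ path e u p, last u p = v & L = walk_len W u p]].

Definition simplex (k : nat) : set 'rV[R]_k :=
  [set p | (forall i, 0 <= p ord0 i) /\ \sum_(i < k) p ord0 i = 1].

Definition proj_simplex (k : nat) (y : 'rV[R]_k) : 'rV[R]_k :=
  xget 0 [set p | simplex p /\ forall q, simplex q -> enorm (p - y) <= enorm (q - y)].

Definition cont_modulus (n m : nat) (omega : R -> R) (g : 'rV[R]_n -> 'rV[R]_m) : Prop :=
  [/\ omega 0 = 0,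
      (forall t, 0 <= t -> 0 <= omega t),
      {within [set t : R | 0 <= t], continuous omega} &
      (forall x y, enorm (g x - g y) <= omega (enorm (x - y)))].

Definition universal_approximator
  (F : forall n m : nat, nat -> set ('rV[R]_n -> 'rV[R]_m))
  (r : forall n m : nat, (R -> R) -> set 'rV[R]_n -> nat -> R) : Prop :=
  (forall n m c c', (0 < c)%N -> (c <= c')%N -> F n m c `<=` F n m c')
  /\ (forall n m omega K,
        {in [set c : nat | (0 < c)%N] &, forall c c' : nat, (c <= c')%N -> r n m omega K c' <= r n m omega K c}
        /\ (r n m omega K c @[c --> \oo] --> 0))
  /\ (forall n m (g : 'rV[R]_n -> 'rV[R]_m) omega K c,
        cont_modulus omega g -> compact K -> (0 < c)%N ->
        exists2 ghat, F n m c ghat &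
          forall x, K x -> enorm (g x - ghat x) <= r n m omega K c).

(** finite probability measures on a finite set, as mass functions;
    couplings and the 1-Wasserstein distance w.r.t. a metric d *)
Definition coupling (V : finType) (mu nu : V -> R) (pi : V -> V -> R) : Prop :=
  [/\ (forall u v, 0 <= pi u v),
      (forall u, \sum_v pi u v = mu u) &
      (forall v, \sum_u pi u v = nu v)].

Definition W1 (V : finType) (d : V -> V -> R) (mu nu : V -> R) : R :=
  inf [set c : R | exists pi, coupling mu nu pi /\ c = \sum_u \sum_v pi u v * d u v].

Definition dirac_pt (V : finType) (y : V) : V -> R := fun u => if u == y then 1 else 0.

Definition That (V V' : finType) (e : rel V) (W : V -> V -> R)
  (fhat : 'rV[R]_#|V| -> 'rV[R]_#|V'|) (x : V) : V' -> R :=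
  fun u => proj_simplex (fhat (\row_(i < #|V|) graph_dist e W x (enum_val i))) ord0 (enum_rank u).

End Defs.
Arguments dirac_pt {R V}.

(* Distinct vertices of a finite connected weighted graph are at distance at
   least the minimal edge weight [del].  Hence the tent functions
   [max(0, 1 - t / del)], applied to the distance row of [x] and summed over
   the fibres of [f], give a Lipschitz map that sends this row exactly to the
   indicator vector of [f x].  A universal approximator approximates this map
   on the finite (hence compact) set of distance rows to within [eta].  The
   nearest point of the simplex is then within [2 eta] of the indicator
   vector in every coordinate, and transporting all of its mass onto [f x]
   costs at most [2 eta] times the sum of the distances to [f x]. *)
From HB Require Import structures.
From mathcomp Require Import all_boot all_order all_algebra.
From mathcomp Require Import all_classical all_reals all_analysis.
From mathcomp Require Import lra ring.
Set Implicit Arguments. Unset Strict Implicit. Unset Printing Implicit Defensive.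
Import Order.TTheory GRing.Theory Num.Theory.
Import numFieldNormedType.Exports.
Local Open Scope classical_set_scope.
Local Open Scope ring_scope.

Section GraphDist.
Variables (R : realType) (V : finType) (e : rel V) (W : V -> V -> R).
Hypotheses (hG : weighted_graph e W) (hc : connected_graph e).

Lemma walk_len_ge0 u p : path e u p -> 0 <= walk_len W u p.
Proof.
elim: p u => [|x p IH] u //= /andP[eux /IH]; have := hG.2.2 _ _ eux; lra.
Qed.

Let walk_lens u v :=
  [set L : R | exists p, [/\ path e u p, last u p = v & L = walk_len W u p]].

Lemma walk_lens_neq0 u v : walk_lens u v !=set0.
Proof. by have [p [pp pl]] := hc u v; exists (walk_len W u p), p. Qed.

Lemma graph_dist_ge0 u v : 0 <= graph_dist e W u v.
Proof.
apply: lb_le_inf; first exact: walk_lens_neq0.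
by move=> _ [p [pp _ ->]]; apply: walk_len_ge0.
Qed.

Lemma graph_dist_le_walk u p :
  path e u p -> graph_dist e W u (last u p) <= walk_len W u p.
Proof.
move=> pp; apply: ge_inf; last by exists p.
by exists 0 => _ [q [pq _ ->]]; apply: walk_len_ge0.
Qed.

Lemma graph_dist_xx u : graph_dist e W u u = 0.
Proof.
by apply/eqP; rewrite eq_le graph_dist_ge0 andbT; exact: (@graph_dist_le_walk u [::]).
Qed.

(* The witness is the minimal edge weight. *)
Lemma graph_dist_sep :
  exists2 del : R, 0 < del & forall x y, x != y -> del <= graph_dist e W x y.
Proof.
pose del := \big[Order.min/1]_(a : V * V | e a.1 a.2) W a.1 a.2.
have del_gt0 : 0 < del by apply: lt_bigmin => // a /hG.2.2.
exists del => // x y neq_xy; apply: lb_le_inf; first exact: walk_lens_neq0.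
move=> _ [[|z p] [/= pp lp ->]]; first by rewrite -lp eqxx in neq_xy.
case/andP: pp => exz pz; have := walk_len_ge0 pz.
have : del <= W x z := @bigmin_le_cond _ _ _ 1 (x, z) _ _ exz.
lra.
Qed.

End GraphDist.

Section EuclideanSimplex.
Variable R : realType.

Lemma enorm_ge0 n (v : 'rV[R]_n) : 0 <= enorm v.
Proof. exact: sqrtr_ge0. Qed.

Lemma normr_coord_le_enorm n (v : 'rV[R]_n) i : `|v ord0 i| <= enorm v.
Proof.
rewrite /enorm -sqrtr_sqr; apply: ler_wsqrtr; rewrite (bigD1 i) //= lerDl.
by apply: sumr_ge0 => k _; exact: sqr_ge0.
Qed.

Lemma enorm_le_sum_normr n (v : 'rV[R]_n) : enorm v <= \sum_i `|v ord0 i|.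
Proof.
set T := \sum_i _.
have T_ge0 : 0 <= T by apply: sumr_ge0.
have coord_le_T i : `|v ord0 i| <= T.
  by rewrite /T (bigD1 i) //= lerDl; apply: sumr_ge0.
rewrite /enorm -(ger0_norm T_ge0) -sqrtr_sqr; apply: ler_wsqrtr.
rewrite expr2 mulr_suml; apply: ler_sum => i _.
by rewrite -real_normK ?num_real // expr2 ler_wpM2l.
Qed.

Lemma simplex_delta_mx n (k : 'I_n) : simplex (delta_mx 0 k : 'rV[R]_n).
Proof.
split=> [i|]; first by rewrite mxE.
rewrite (bigD1 k) //= mxE !eqxx big1 ?addr0 // => j /negbTE njk.
by rewrite mxE njk andbF.
Qed.

Lemma nearest_simplex_coord_dist n (y p q : 'rV[R]_n) i :
  (forall q, simplex q -> enorm (p - y) <= enorm (q - y)) -> simplex q ->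
  `|p ord0 i - q ord0 i| <= 2 * enorm (q - y).
Proof.
move=> p_min q_simplex.
have py := normr_coord_le_enorm (p - y) i; have qy := normr_coord_le_enorm (q - y) i.
rewrite !mxE in py qy.
have := ler_distD (y ord0 i) (p ord0 i) (q ord0 i).
rewrite (distrC (y ord0 i)); have := p_min q q_simplex; lra.
Qed.

End EuclideanSimplex.

Section Wasserstein.
Variables (R : realType) (V : finType) (d : V -> V -> R).
Hypothesis d_ge0 : forall u v, 0 <= d u v.

Lemma W1_le_cost (mu nu : V -> R) pi :
  coupling mu nu pi -> W1 d mu nu <= \sum_u \sum_v pi u v * d u v.
Proof.
move=> pi_coupling; apply: ge_inf; last by exists pi.
exists 0 => _ [pi' [[pi'_ge0 _ _] ->]].
by do 2 (apply: sumr_ge0 => ? _); apply: mulr_ge0.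
Qed.

Lemma W1_mass_neq (mu nu : V -> R) :
  \sum_u mu u != \sum_v nu v -> W1 d mu nu = 0.
Proof.
move=> mass_neq; rewrite /W1 -inf0; congr inf; apply/seteqP; split=> // c.
move=> [pi [[_ pi_mu pi_nu] _]]; move: mass_neq.
under eq_bigr do rewrite -pi_mu; under [X in _ != X]eq_bigr do rewrite -pi_nu.
by rewrite exchange_big eqxx.
Qed.

Lemma sum_dirac_pt (y : V) : \sum_v dirac_pt y v = 1 :> R.
Proof.
rewrite (bigD1 y) //= big1 => [|v /negbTE nvy]; last by rewrite /dirac_pt nvy.
by rewrite /dirac_pt eqxx addr0.
Qed.

Lemma W1_dirac_le (mu : V -> R) y :
  (forall u, 0 <= mu u) -> \sum_u mu u = 1 ->
  W1 d mu (dirac_pt y) <= \sum_u mu u * d u y.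
Proof.
move=> mu_ge0 mu_mass.
pose pi u v := mu u * dirac_pt y v.
have pi_coupling : coupling mu (dirac_pt y) pi.
  split=> [u v|u|v]; rewrite /pi.
  - by rewrite mulr_ge0 // /dirac_pt; case: ifP.
  - by rewrite -mulr_sumr sum_dirac_pt mulr1.
  - by rewrite -mulr_suml mu_mass mul1r.
suff <- : \sum_u \sum_v pi u v * d u v = \sum_u mu u * d u y by exact: W1_le_cost.
apply: eq_bigr => u _; rewrite (bigD1 y) //= big1 => [|v /negbTE nvy].
  by rewrite /pi /dirac_pt eqxx mulr1 addr0.
by rewrite /pi /dirac_pt nvy mulr0 mul0r.
Qed.

Hypothesis d_xx : forall u, d u u = 0.

Lemma W1_proj_simplex_dirac_le (y : 'rV[R]_#|V|) (t : V) :
  W1 d (fun u => proj_simplex y ord0 (enum_rank u)) (dirac_pt t)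
    <= 2 * enorm (delta_mx 0 (enum_rank t) - y) * \sum_u d u t.
Proof.
have rhs_ge0 : 0 <= 2 * enorm (delta_mx 0 (enum_rank t) - y) * \sum_u d u t.
  by rewrite !mulr_ge0 ?enorm_ge0 ?sumr_ge0.
rewrite /proj_simplex; set nearest := [set p | _].
(* If no nearest point existed, [xget] would return the junk value [0], whose
   mass [0] differs from that of the Dirac mass. *)
case: (pselect (exists p, nearest p)) => [/(xgetPex 0)|no_nearest]; last first.
  rewrite (xgetPN 0 (fun p np => no_nearest (ex_intro _ p np))).
  rewrite W1_mass_neq // sum_dirac_pt big1 => [|u _]; last by rewrite mxE.
  by rewrite eq_sym oner_eq0.
set p := xget 0 nearest => -[[p_ge0 p_mass] p_min].
have mu_mass : \sum_u p ord0 (enum_rank u) = 1.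
  by rewrite -p_mass (reindex (@enum_rank V)) //; exact: onW_bij (enum_rank_bij V).
apply: le_trans (W1_dirac_le t (fun u => p_ge0 (enum_rank u)) mu_mass) _.
rewrite mulr_sumr; apply: ler_sum => u _.
have [->|nut] := eqVneq u t; first by rewrite d_xx !mulr0.
rewrite ler_wpM2r //.
have := nearest_simplex_coord_dist (enum_rank u) p_min (simplex_delta_mx _ (enum_rank t)).
by rewrite mxE (inj_eq enum_rank_inj) (negbTE nut) andbF subr0 ger0_norm.
Qed.

End Wasserstein.

Lemma max0_dist_le (R : realType) (a b : R) : `|Num.max 0 a - Num.max 0 b| <= `|a - b|.
Proof.
have ab := ler_norm (a - b); have ba := ler_norm (b - a); rewrite distrC in ba.
rewrite ler_norml; have [a0|a0] := leP a 0; have [b0|b0] := leP b 0;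
  rewrite ?(max_l a0) ?(max_l b0) ?(max_r (ltW a0)) ?(max_r (ltW b0)); lra.
Qed.

Section HatDecoder.
Variables (R : realType) (V V' : finType) (f : V -> V') (del : R).
Hypothesis del_gt0 : 0 < del.

Definition hat_decoder (z : 'rV[R]_#|V|) : 'rV[R]_#|V'| :=
  \row_j \sum_(y | f y == enum_val j) Num.max 0 (1 - z ord0 (enum_rank y) / del).

Lemma hat_decoder_dist_row (d : V -> V -> R) x :
  d x x = 0 -> (forall y, x != y -> del <= d x y) ->
  hat_decoder (\row_i d x (enum_val i)) = delta_mx 0 (enum_rank (f x)).
Proof.
move=> d_xx d_sep; apply/rowP => j; rewrite !mxE eqxx /=.
under eq_bigr => y _ do rewrite mxE enum_rankK.
have tent_off y : x != y -> Num.max 0 (1 - d x y / del) = 0.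
  move=> /d_sep sep; have : 1 <= d x y / del by rewrite ler_pdivlMr // mul1r.
  by move=> ?; apply: max_l; lra.
have [->|nj] := eqVneq j (enum_rank (f x)).
  rewrite (bigD1 x) /= ?enum_rankK // d_xx mul0r subr0 max_r ?ler01 // big1 ?addr0 //.
  by move=> y /andP[_]; rewrite eq_sym => /tent_off.
apply: big1 => y /eqP fy_j; apply: tent_off; apply: contra_neq nj => ->.
by rewrite fy_j enum_valK.
Qed.

Lemma hat_decoder_modulus :
  cont_modulus (fun t => (#|V'| * #|V|)%:R / del * t) hat_decoder.
Proof.
have C_ge0 : 0 <= (#|V'| * #|V|)%:R / del by rewrite divr_ge0 // ltW.
split=> [|t t_ge0||z z']; first by rewrite mulr0.
- exact: mulr_ge0.
- by apply: continuous_subspaceT => t; exact: mulrl_continuous.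
set dz := enorm (z - z') / del.
have dz_ge0 : 0 <= dz by rewrite divr_ge0 ?enorm_ge0 // ltW.
have tent_lip y : `|Num.max 0 (1 - z ord0 (enum_rank y) / del)
                   - Num.max 0 (1 - z' ord0 (enum_rank y) / del)| <= dz.
  apply: le_trans (max0_dist_le _ _) _.
  have -> : 1 - z ord0 (enum_rank y) / del - (1 - z' ord0 (enum_rank y) / del)
           = - (z - z') ord0 (enum_rank y) / del by rewrite !mxE; ring.
  rewrite normrM normrN [`|del^-1|]ger0_norm ?invr_ge0 ?(ltW del_gt0) //.
  by rewrite /dz ler_pM2r ?invr_gt0 // normr_coord_le_enorm.
have coord_lip j : `|(hat_decoder z - hat_decoder z') ord0 j| <= #|V|%:R * dz.
  rewrite !mxE -sumrB; apply: le_trans (ler_norm_sum _ _ _) _.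
  apply: le_trans (ler_sum _ (fun y _ => tent_lip y)) _.
  by rewrite sumr_const -[dz *+ _]mulr_natl ler_wpM2r // ler_nat max_card.
apply: le_trans (enorm_le_sum_normr _) _.
apply: le_trans (ler_sum _ (fun j _ => coord_lip j)) _.
by rewrite sumr_const card_ord /dz -[_ *+ #|V'|]mulr_natl natrM !mulrA [leRHS]mulrAC.
Qed.

End HatDecoder.

Lemma universal_approximator_approx (R : realType)
    (F : forall n m : nat, nat -> set ('rV[R]_n -> 'rV[R]_m))
    (r : forall n m : nat, (R -> R) -> set 'rV[R]_n -> nat -> R)
    n m (g : 'rV[R]_n -> 'rV[R]_m) omega (K : set 'rV[R]_n) (eta : R) :
  universal_approximator F r -> cont_modulus omega g -> compact K -> 0 < eta ->
  exists c, (0 < c)%N /\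
    exists2 ghat, F n m c ghat & forall x, K x -> enorm (g x - ghat x) < eta.
Proof.
move=> [_ [r_cvg approx]] g_mod K_compact eta_gt0.
have [_ /cvgrPdist_lt /(_ eta eta_gt0) [N _ r_small]] := r_cvg n m omega K.
have [ghat F_ghat ghat_err] := approx n m g omega K N.+1 g_mod K_compact isT.
exists N.+1; split=> //; exists ghat => // x Kx.
apply: le_lt_trans (ghat_err x Kx) _.
have := r_small N.+1 (leqnSn N); rewrite /= sub0r normrN.
exact: le_lt_trans (ler_norm _).
Qed.

Theorem mainTheorem11 (R : realType) (V V' : finType)
  (e : rel V) (W : V -> V -> R) (e' : rel V') (W' : V' -> V' -> R)
  (hG : weighted_graph e W) (hG' : weighted_graph e' W')
  (hc : connected_graph e) (hc' : connected_graph e')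
  (f : V -> V')
  (F : forall n m : nat, nat -> set ('rV[R]_n -> 'rV[R]_m))
  (r : forall n m : nat, (R -> R) -> set 'rV[R]_n -> nat -> R)
  (hF : universal_approximator F r)
  (eps : R) (heps : 0 < eps) :
  exists c : nat, (0 < c)%N /\
    exists2 fhat, F #|V| #|V'| c fhat &
      forall x : V, W1 (graph_dist e' W') (That e W fhat x) (dirac_pt (f x)) < eps.
Proof.
have [del del_gt0 dist_sep] := graph_dist_sep hG hc.
have d'_ge0 := graph_dist_ge0 hG' hc'.
pose D := \sum_u \sum_v graph_dist e' W' u v.
have D_ge0 : 0 <= D by do 2 (apply: sumr_ge0 => ? _).
pose eta := eps / (2 * (D + 1)).
have eta_gt0 : 0 < eta by rewrite divr_gt0 // mulr_gt0 //; lra.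
pose enc x := \row_(i < #|V|) graph_dist e W x (enum_val i).
have enc_compact : compact [set enc x | x in [set: V]].
  exact/finite_compact/finite_image/finite_finset.
have [c [c_gt0 [fhat F_fhat fhat_err]]] :=
  universal_approximator_approx hF (hat_decoder_modulus f del_gt0) enc_compact eta_gt0.
exists c; split=> //; exists fhat => // x.
have err : enorm (delta_mx 0 (enum_rank (f x)) - fhat (enc x)) < eta.
  rewrite -(hat_decoder_dist_row f del_gt0 (graph_dist_xx hG hc x) (dist_sep x)).
  by apply: fhat_err; exists x.
have sum_le_D : \sum_u graph_dist e' W' u (f x) <= D.
  by apply: ler_sum => u _; rewrite (bigD1 (f x)) //= lerDl sumr_ge0.
apply: le_lt_trans (W1_proj_simplex_dirac_le d'_ge0 (graph_dist_xx hG' hc') _ _) _.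
have : 2 * eta * (D + 1) = eps by rewrite /eta; field; lra.
have := enorm_ge0 (delta_mx 0 (enum_rank (f x)) - fhat (enc x)); nra.
Qed.
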